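(* Consider the scalar $N$-player linear-quadratic differential game and the matrix $\mathbf M$ described in the context. Let $\mu=(\mu_1,\dots,\mu_N)$ be a weight vector with $\mu_i>0$ and $\sum_i\mu_i=1$, and set $\mu^s_{\max}=\max_i\mu_i/s_i$. Then every feedback Nash equilibrium $(k_1,\dots,k_N)$ satisfies $$\sum_{i=1}^N\mu_ik_i\le\mu^s_{\max}\big(\varrho(\mathbf M)+a\big).$$ Hence the feedback price of anarchy satisfies $$\rho^{FB}_\mu\le\frac{\mu^s_{\max}\big(\varrho(\mathbf M)+a\big)}{\hat k_\mu},$$ where $\varrho(\mathbf M)$ denotes the spectral radius of $\mathbf M$. In particular, for the weights $\bar\mu_i=s_i/\sum_{j=1}^Ns_j$, $$\rho^{FB}_{\bar\mu}\le\frac{\varrho(\mathbf M)+a}{\big(\sum_{i=1}^Ns_i\big)\,\hat k_{\bar\mu}}.$$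
   Context: **Game.** The game is the infinite-horizon scalar linear-quadratic differential game with players $i\in\{1,\dots,N\}$. - State dynamics: $\dot x(t)=ax(t)+\sum_{i=1}^N b_iu_i(t)$, with $x(0)=x_0\neq0$. - Cost of player $i$: $L_i(u)=\int_0^\infty\big(q_ix(t)^2+r_iu_i(t)^2\big)\,dt$. - Parameters: $a\in\mathbb R$; $q_i>0$, $r_i>0$, $b_i\neq0$ are real scalars. - Notation: $s_i=b_i^2/r_i$ and $\sigma_i=s_iq_i$. **Feedback Nash equilibrium (standard characterization).** A feedback Nash equilibrium is an $N$-tuple of stationary linear policies $u_i=-\frac{b_i}{r_i}k_ix$ such that $(k_1,\dots,k_N)$ solves $$2\big(a-\sum_j s_jk_j\big)k_i+q_i+s_ik_i^2=0\quad\text{for all } i,$$ with $a-\sum_js_jk_j<0$. Player $i$'s cost is $k_ix_0^2$. **Social optimum.** For weights $\mu$, define $$\bar q_\mu=\sum_i\mu_iq_i,\qquad \bar b_\mu=\sum_i\frac{b_i^2}{\mu_ir_i},\qquad \hat k_\mu=\frac{a+\sqrt{a^2+\bar q_\mu\bar b_\mu}}{\bar b_\mu}.$$ The minimum over all controls of $\sum_i\mu_iL_i$ equals $\hat k_\mu x_0^2$. **Feedback price of anarchy.** It is defined as $$\rho^{FB}_\mu=\max\Big\{\sum_i\mu_ik_i/\hat k_\mu\Big\},$$ where the maximum (or supremum) is taken over all feedback Nash equilibria. **Matrix $\mathbf M$.** The matrix $\widetilde{\mathbf M}$ is a $2^N\times2^N$ real matrix whose rows and columns are indexed by subsets $\Omega\subseteq\{1,\dots,N\}$.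 Write $n_\Omega=|\Omega|$. - Row $\Omega=\emptyset$: entry $1$ in each column $\{j\}$ for $j=1,\dots,N$; entry $-a$ in column $\emptyset$; all other entries $0$. - Row $\Omega\neq\emptyset$: entry $\sigma_i/(2n_\Omega-1)$ in column $\Omega\setminus\{i\}$ for each $i\in\Omega$; entry $-1/(2n_\Omega-1)$ in column $\Omega\cup\{i\}$ for each $i\notin\Omega$; entry $a/(2n_\Omega-1)$ in column $\Omega$; all other entries $0$. Let $\mathbf D$ be the diagonal matrix with $\Omega$-th diagonal entry $\prod_{j\in\Omega}s_j$ (the empty product is $1$). Then $\mathbf M=\mathbf D^{-1}\widetilde{\mathbf M}\mathbf D$. *)

(* Scalars live in an arbitrary numClosedFieldType C
   (e.g. the complex numbers); the game parameters are required to be real. *)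
From HB Require Import structures.
From mathcomp Require Import all_boot all_order all_algebra.
Set Implicit Arguments. Unset Strict Implicit. Unset Printing Implicit Defensive.
Import Order.TTheory GRing.Theory Num.Theory.
Local Open Scope ring_scope.

Section Game.
Variables (C : numClosedFieldType) (N : nat).
Variables (a : C) (b q r : 'I_N -> C).

Definition s_ (i : 'I_N) : C := b i ^+ 2 / r i.
Definition sigma_ (i : 'I_N) : C := s_ i * q i.

Definition FNE (k : 'I_N -> C) : Prop :=
  (forall i, k i \is Num.real) /\
  (forall i, 2 * (a - \sum_j s_ j * k j) * k i + q i + s_ i * k i ^+ 2 = 0) /\
  a - \sum_j s_ j * k j < 0.

(* social optimum value for weights mu *)
Definition qbar (mu : 'I_N -> C) : C := \sum_i mu i * q i.
Definition bbar (mu : 'I_N -> C) : C := \sum_i b i ^+ 2 / (mu i * r i).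
Definition khat (mu : 'I_N -> C) : C :=
  (a + sqrtC (a ^+ 2 + qbar mu * bbar mu)) / bbar mu.

(* mu^s_max = max_i mu_i / s_i (all these are positive, so 0 is a neutral seed) *)
Definition mu_s_max (mu : 'I_N -> C) : C := \big[Num.max/0]_i (mu i / s_ i).

(* Matrices indexed by subsets of the player set, via enumeration of {set 'I_N} *)
Definition nsub := #|{: {set 'I_N}}|.
Definition subs (x : 'I_nsub) : {set 'I_N} := enum_val x.

Definition Mtilde_entry (Om Th : {set 'I_N}) : C :=
  if Om == set0 then
    \sum_(j : 'I_N) (Th == [set j])%:R + (Th == set0)%:R * (- a)
  else
    let c := (2 * #|Om|%:R - 1)^-1 in
    \sum_(i in Om) (Th == Om :\ i)%:R * (sigma_ i * c)
    + \sum_(i | i \notin Om) (Th == i |: Om)%:R * (- c)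
    + (Th == Om)%:R * (a * c).

Definition Mtilde : 'M[C]_nsub := \matrix_(x, y) Mtilde_entry (subs x) (subs y).
Definition Dmat : 'M[C]_nsub := \matrix_(x, y) ((x == y)%:R * \prod_(j in subs x) s_ j).
Definition Mmat : 'M[C]_nsub := invmx Dmat *m Mtilde *m Dmat.

End Game.

Definition is_spectral_radius (C : numClosedFieldType) (n : nat) (A : 'M[C]_n) (rho : C) : Prop :=
  (exists2 l, eigenvalue A l & `|l| = rho) /\ (forall l, eigenvalue A l -> `|l| <= rho).

From HB Require Import structures.
From mathcomp Require Import all_boot all_order all_algebra.
From mathcomp Require Import ring.
Import Order.TTheory GRing.Theory Num.Theory.
Local Open Scope ring_scope.

Set Implicit Arguments. Unset Strict Implicit.

(* Let k be a feedback Nash equilibrium, y_i = s_i k_i and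
   lambda = sum_j y_j - a > 0.  The Riccati equations say exactly that
   sigma_i = 2 lambda y_i - y_i^2 for every i.  From this identity one checks,
   row by row, that the vector w indexed by subsets, w_Th = prod_(j in Th) y_j,
   satisfies Mtilde w = lambda w; since D u = w for u_Th = prod_(j in Th) k_j,
   u is an eigenvector of M = D^-1 Mtilde D for the eigenvalue lambda.  Hence
   lambda <= rho, i.e. sum_j s_j k_j <= rho + a.  As every k_i >= 0,
   sum_i mu_i k_i = sum_i (mu_i / s_i) s_i k_i <= mu^s_max (rho + a), and
   dividing by khat_mu >= 0 gives the price-of-anarchy bound.  For the weights
   mubar_i = s_i / sum_j s_j the weighted sum is (sum_j s_j k_j) / sum_j s_j. *)

Lemma s_gt0 (C : numClosedFieldType) (N : nat) (b r : 'I_N -> C) (i : 'I_N) :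
  b i \is Num.real -> b i != 0 -> 0 < r i -> 0 < s_ b r i.
Proof.
move=> b_real b_neq0 r_gt0; apply: divr_gt0 => //.
by rewrite lt_def -realEsqr b_real andbT expf_neq0.
Qed.

Lemma sum_delta (R : pzSemiRingType) (T : finType) (x : T) (G : T -> R) :
  \sum_(y : T) (y == x)%:R * G y = G x.
Proof.
rewrite (bigD1 x) //= eqxx mul1r big1 ?addr0 // => z /negbTE ->.
by rewrite mul0r.
Qed.

(* The normalising factors 1/(2n-1) of Mtilde are well defined in
   characteristic zero, since 2n-1 is odd. *)
Lemma odd_nat_neq0 (R : numDomainType) (n : nat) : 2 * n%:R - 1 != 0 :> R.
Proof.
rewrite subr_eq0 -natrM pnatr_eq1.
by apply/negP => /eqP /(congr1 odd); rewrite oddM.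
Qed.

Section MtildeEigenvector.
Variables (C : numClosedFieldType) (N : nat) (a : C) (b q r : 'I_N -> C).
Variables (y : 'I_N -> C) (lam : C).

Hypothesis sigma_y : forall i, sigma_ b q r i = 2 * lam * y i - y i ^+ 2.
Hypothesis sum_y : \sum_i y i = lam + a.

Definition prod_over (Th : {set 'I_N}) : C := \prod_(j in Th) y j.

(* Row of the empty set: it reads sum_j y_j - a = lam. *)
Lemma Mtilde_row_set0 :
  \sum_(Th : {set 'I_N}) Mtilde_entry a b q r set0 Th * prod_over Th
  = lam * prod_over set0.
Proof.
rewrite /Mtilde_entry eqxx.
under eq_bigr do rewrite mulrDl.
rewrite big_split /=.
under eq_bigr do rewrite mulr_suml.
rewrite exchange_big /=.
under eq_bigr do rewrite sum_delta.
under [X in _ + X]eq_bigr do rewrite -mulrA.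
rewrite sum_delta /prod_over big_set0 mulr1.
under eq_bigr do rewrite big_set1.
by rewrite sum_y; ring.
Qed.

(* Row of a nonempty Om: removing a player i in Om contributes
   sigma_i / y_i = 2 lam - y_i, adding a player i outside Om contributes
   y_i; together with the diagonal term a this gives (2|Om| - 1) lam. *)
Lemma Mtilde_row_nonempty (Om : {set 'I_N}) : Om != set0 ->
  \sum_(Th : {set 'I_N}) Mtilde_entry a b q r Om Th * prod_over Th
  = lam * prod_over Om.
Proof.
move=> /negbTE OmN0; rewrite /Mtilde_entry OmN0.
set c := (2 * #|Om|%:R - 1)^-1.
under eq_bigr do rewrite !mulrDl.
rewrite !big_split /=.
under eq_bigr do rewrite mulr_suml.
rewrite exchange_big /=.
under eq_bigr do under eq_bigr do rewrite -mulrA.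
under eq_bigr do rewrite sum_delta.
under [X in _ + X + _]eq_bigr do rewrite mulr_suml.
rewrite [X in _ + X + _]exchange_big /=.
under [X in _ + X + _]eq_bigr do under eq_bigr do rewrite -mulrA.
under [X in _ + X + _]eq_bigr do rewrite sum_delta.
under [X in _ + _ + X]eq_bigr do rewrite -mulrA.
rewrite sum_delta.
have remove_i i : i \in Om ->
    sigma_ b q r i * c * prod_over (Om :\ i) = c * ((2 * lam - y i) * prod_over Om).
  by move=> iOm; rewrite /prod_over (big_setD1 i iOm) /= sigma_y; ring.
have add_i i : i \notin Om ->
    - c * prod_over (i |: Om) = - c * (y i * prod_over Om).
  by move=> iOm; rewrite /prod_over (big_setU1 i iOm).
rewrite (eq_bigr _ remove_i) (eq_bigr _ add_i) -!mulr_sumr -!mulr_suml.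
rewrite sumrB sumr_const.
have outside_Om : \sum_(i | i \notin Om) y i = lam + a - \sum_(i in Om) y i.
  by rewrite -sum_y [in RHS](bigID (mem Om)) /= addrC addrK.
rewrite outside_Om.
have cK : c * (2 * #|Om|%:R - 1) = 1 by apply: mulVf; exact: odd_nat_neq0.
transitivity (c * (2 * #|Om|%:R - 1) * (lam * prod_over Om)); last first.
  by rewrite cK mul1r.
by rewrite -mulr_natr; ring.
Qed.

Lemma Mtilde_prod_over (Om : {set 'I_N}) :
  \sum_(Th : {set 'I_N}) Mtilde_entry a b q r Om Th * prod_over Th
  = lam * prod_over Om.
Proof.
have [-> | OmN0] := eqVneq Om set0; first exact: Mtilde_row_set0.
exact: Mtilde_row_nonempty.
Qed.

End MtildeEigenvector.

Lemma sum_subs (C : numClosedFieldType) (N : nat) (G : {set 'I_N} -> C) :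
  \sum_(z < nsub N) G (subs z) = \sum_(Th : {set 'I_N}) G Th.
Proof.
rewrite (reindex (@subs N)) //; exists enum_rank => [z _ | Th _].
  exact: enum_valK.
exact: enum_rankK.
Qed.

Section EquilibriumEigenvalue.
Variables (C : numClosedFieldType) (N : nat) (a : C) (b q r : 'I_N -> C).
Hypothesis s_neq0 : forall i, s_ b r i != 0.

Lemma Dmat_unit : Dmat b r \in unitmx.
Proof.
have -> : Dmat b r = diag_mx (\row_x \prod_(j in subs x) s_ b r j).
  apply/matrixP => x z; rewrite !mxE.
  by case: eqP => [->|_]; rewrite ?mul1r ?mul0r.
rewrite unitmxE det_diag unitfE; apply/prodf_neq0 => x _.
by rewrite mxE; apply/prodf_neq0.
Qed.

(* The scalar relations for y_i = s_i k_i make lam an eigenvalue of M, with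
   eigenvector u = D^-1 w of entries prod_(j in Th) k_j. *)
Lemma eigenvalue_Mmat (k : 'I_N -> C) (lam : C) :
  (forall i, sigma_ b q r i = 2 * lam * (s_ b r i * k i) - (s_ b r i * k i) ^+ 2) ->
  \sum_i s_ b r i * k i = lam + a ->
  eigenvalue (Mmat a b q r) lam.
Proof.
move=> sigma_y sum_y; pose y i := s_ b r i * k i.
pose u : 'cV[C]_(nsub N) := \col_x \prod_(j in subs x) k j.
pose w : 'cV[C]_(nsub N) := \col_x prod_over y (subs x).
have Du : Dmat b r *m u = w.
  apply/matrixP => x i; rewrite !mxE.
  under eq_bigr do rewrite !mxE.
  rewrite (bigD1 x) //= [X in _ + X]big1 ?addr0.
    by rewrite eqxx mul1r /prod_over -big_split.
  by move=> z zx; rewrite eq_sym (negbTE zx) !mul0r.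
have Mtilde_w : Mtilde a b q r *m w = lam *: w.
  apply/matrixP => x i; rewrite !mxE.
  under eq_bigr do rewrite !mxE.
  rewrite -(Mtilde_prod_over sigma_y sum_y).
  exact: (sum_subs (fun Th => Mtilde_entry a b q r (subs x) Th * prod_over y Th)).
have Mu : Mmat a b q r *m u = lam *: u.
  by rewrite /Mmat -!mulmxA Du Mtilde_w -scalemxAr -Du mulKmx ?Dmat_unit.
have u_neq0 : u != 0.
  apply/negP => /eqP /matrixP /(_ (enum_rank set0) 0).
  by rewrite !mxE /subs enum_rankK big_set0 => /eqP; rewrite oner_eq0.
rewrite /eigenvalue /eigenspace kermx_eq0 row_free_unit.
apply: contra u_neq0 => unit_shift.
by rewrite -(mulKmx unit_shift u) mulmxBl mul_scalar_mx Mu subrr mulmx0.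
Qed.

End EquilibriumEigenvalue.

Section Equilibria.
Variables (C : numClosedFieldType) (N : nat) (a : C) (b q r : 'I_N -> C).
Hypothesis s_pos : forall i, 0 < s_ b r i.
Hypothesis q_gt0 : forall i, 0 < q i.

(* With a stable closed loop, a negative gain k_i would make every term of
   the i-th Riccati equation positive. *)
Lemma FNE_ge0 (k : 'I_N -> C) : FNE a b q r k -> forall i, 0 <= k i.
Proof.
move=> [k_real [riccati stable]] i.
have [// | ki_lt0] := real_ge0P (k_real i).
have gain_lt0 : 2 * (a - \sum_j s_ b r j * k j) < 0 by rewrite pmulr_rlt0.
suff : 0 < 2 * (a - \sum_j s_ b r j * k j) * k i + q i + s_ b r i * k i ^+ 2.
  by rewrite riccati ltxx.
have sk2_gt0 : 0 < s_ b r i * k i ^+ 2 by rewrite mulr_gt0 // expr2 nmulr_rgt0.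
by rewrite !addr_gt0 // nmulr_rgt0.
Qed.

(* The Riccati equations, multiplied by s_i, are the eigenvalue relations
   with y_i = s_i k_i and lam = sum_j s_j k_j - a. *)
Lemma FNE_eigenvalue (k : 'I_N -> C) :
  FNE a b q r k -> eigenvalue (Mmat a b q r) (\sum_j s_ b r j * k j - a).
Proof.
move=> [_ [riccati _]].
have s_neq0 i : s_ b r i != 0 by rewrite gt_eqF.
apply: (eigenvalue_Mmat s_neq0); last by rewrite subrK.
move=> i; set lam := \sum_j s_ b r j * k j - a.
transitivity (s_ b r i * (2 * (a - \sum_j s_ b r j * k j) * k i + q i
               + s_ b r i * k i ^+ 2) + (2 * lam * (s_ b r i * k i) - (s_ b r i * k i) ^+ 2)).
  by rewrite /lam /sigma_; ring.
by rewrite riccati mulr0 add0r.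
Qed.

(* Since lam > 0 is an eigenvalue of M, it is at most the spectral radius. *)
Lemma FNE_closed_loop_le (k : 'I_N -> C) (rho : C) :
  is_spectral_radius (Mmat a b q r) rho -> FNE a b q r k ->
  \sum_j s_ b r j * k j <= rho + a.
Proof.
move=> [_ rho_max] k_FNE; have lam_le := rho_max _ (FNE_eigenvalue k_FNE).
have lam_gt0 : 0 < \sum_j s_ b r j * k j - a.
  by case: k_FNE => _ [_ stable]; rewrite subr_gt0 -subr_lt0.
by rewrite gtr0_norm // lerBlDr in lam_le.
Qed.

End Equilibria.

Lemma bigmax0_real_bounds (C : numDomainType) (I : eqType) (F : I -> C) (s : seq I) :
  (forall i, F i \is Num.real) ->
  0 <= \big[Num.max/0]_(j <- s) F j /\
  (forall x, x \in s -> F x <= \big[Num.max/0]_(j <- s) F j).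
Proof.
move=> F_real; elim: s => [|h t [max_ge0 max_ge]]; first by rewrite big_nil.
rewrite big_cons; set m := \big[_/_]_(j <- t) _.
have m_real : m \is Num.real by rewrite ger0_real.
have [Fh_le m_le] : F h <= Num.max (F h) m /\ m <= Num.max (F h) m.
  by case: (real_leP (F_real h) m_real) => le; split=> //; exact: ltW.
split; first exact: le_trans m_le.
by move=> x; rewrite in_cons => /orP [/eqP -> // | /max_ge /le_trans]; apply.
Qed.

Lemma mu_s_max_ge0 (C : numClosedFieldType) (N : nat) (b r mu : 'I_N -> C) :
  (forall i, mu i / s_ b r i \is Num.real) -> 0 <= mu_s_max b r mu.
Proof. by move=> ratio_real; case: (bigmax0_real_bounds (index_enum 'I_N) ratio_real). Qed.

Lemma weighted_sum_le (C : numClosedFieldType) (N : nat) (b r mu k : 'I_N -> C) :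
  (forall i, 0 < s_ b r i) -> (forall i, mu i / s_ b r i \is Num.real) ->
  (forall i, 0 <= k i) ->
  \sum_i mu i * k i <= mu_s_max b r mu * \sum_i s_ b r i * k i.
Proof.
move=> s_pos ratio_real k_ge0.
have [_ mu_le] := bigmax0_real_bounds (index_enum 'I_N) ratio_real.
rewrite mulr_sumr; apply: ler_sum => i _.
have s_neq0 : s_ b r i != 0 by rewrite gt_eqF.
have -> : mu i * k i = mu i / s_ b r i * (s_ b r i * k i) by rewrite mulrA divfK.
apply: ler_wpM2r; first by apply: mulr_ge0; [exact: ltW | exact: k_ge0].
by apply: mu_le; rewrite mem_index_enum.
Qed.

Lemma real_norm_le_sqrtC (C : numClosedFieldType) (a x : C) :
  a \is Num.real -> 0 <= x -> `|a| <= sqrtC (a ^+ 2 + x).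
Proof.
move=> a_real x_ge0; have a2_ge0 : 0 <= a ^+ 2 by rewrite -realEsqr.
rewrite -(real_normK a_real) -{1}(sqrCK (normr_ge0 a)) ler_sqrtC ?nnegrE.
- by rewrite real_normK // lerDl.
- by rewrite exprn_ge0.
by rewrite real_normK // addr_ge0.
Qed.

(* The social optimum value khat_mu is nonnegative: its numerator is
   a + sqrt(a^2 + qbar bbar) >= a + |a| >= 0 and bbar >= 0. *)
Lemma khat_ge0 (C : numClosedFieldType) (N : nat) (a : C) (b q r mu : 'I_N -> C) :
  a \is Num.real -> (forall i, b i \is Num.real) -> (forall i, 0 <= q i) ->
  (forall i, 0 <= r i) -> (forall i, 0 <= mu i) -> 0 <= khat a b q r mu.
Proof.
move=> a_real b_real q_ge0 r_ge0 mu_ge0.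
have qbar_ge0 : 0 <= qbar q mu by apply: sumr_ge0 => i _; rewrite mulr_ge0.
have bbar_ge0 : 0 <= bbar b r mu.
  apply: sumr_ge0 => i _; apply: divr_ge0; last exact: mulr_ge0.
  by rewrite -realEsqr.
rewrite /khat divr_ge0 //.
have a_normD_ge0 : 0 <= a + `|a|.
  have na_real : - a \is Num.real by rewrite rpredN.
  have := real_ler_norm na_real.
  by rewrite normrN -subr_ge0 opprK addrC.
apply: le_trans a_normD_ge0 _; rewrite lerD2l.
by apply: real_norm_le_sqrtC; rewrite ?mulr_ge0.
Qed.

Unset Implicit Arguments. Set Strict Implicit.

Theorem theorem5 (C : numClosedFieldType) (N : nat) (a : C) (b q r : 'I_N -> C)
  (hN : (0 < N)%N) (ha : a \is Num.real)
  (hb : forall i, b i \is Num.real /\ b i != 0)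
  (hq : forall i, q i \is Num.real /\ 0 < q i)
  (hr : forall i, r i \is Num.real /\ 0 < r i)
  (rho : C) (hrho : is_spectral_radius (Mmat a b q r) rho) :
  (forall mu : 'I_N -> C,
     (forall i, mu i \is Num.real /\ 0 < mu i) -> \sum_i mu i = 1 ->
     forall k : 'I_N -> C, FNE a b q r k ->
       \sum_i mu i * k i <= mu_s_max b r mu * (rho + a) /\
       (\sum_i mu i * k i) / khat a b q r mu <= mu_s_max b r mu * (rho + a) / khat a b q r mu)
  /\
  (let mubar := fun i => s_ b r i / \sum_j s_ b r j in
   forall k : 'I_N -> C, FNE a b q r k ->
     (\sum_i mubar i * k i) / khat a b q r mubar
       <= (rho + a) / ((\sum_j s_ b r j) * khat a b q r mubar)).
Proof.
have s_pos i : 0 < s_ b r i by case: (hb i) (hr i) => ? ? [_ ?]; exact: s_gt0.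
have q_pos i : 0 < q i by case: (hq i).
have b_real i : b i \is Num.real by case: (hb i).
have q_ge0 i : 0 <= q i by exact/ltW.
have r_ge0 i : 0 <= r i by case: (hr i) => _ /ltW.
have closed_loop_le k : FNE a b q r k -> \sum_j s_ b r j * k j <= rho + a.
  exact: FNE_closed_loop_le.
split=> [mu mu_pos _ k k_FNE | mubar k k_FNE].
  have ratio_real i : mu i / s_ b r i \is Num.real.
    by case: (mu_pos i) => mu_real _; rewrite rpredM // gtr0_real // invr_gt0.
  have sum_le : \sum_i mu i * k i <= mu_s_max b r mu * (rho + a).
    apply: le_trans (weighted_sum_le s_pos ratio_real (FNE_ge0 s_pos q_pos k_FNE)) _.
    by apply: ler_wpM2l; [exact: mu_s_max_ge0 | exact: closed_loop_le].
  split=> //; apply: ler_wpM2r sum_le; rewrite invr_ge0 khat_ge0 // => i.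
  by case: (mu_pos i) => _ /ltW.
have sum_s_ge0 : 0 <= \sum_j s_ b r j by apply: sumr_ge0 => i _; exact/ltW.
have khat_mubar_ge0 : 0 <= khat a b q r mubar.
  by apply: khat_ge0 => // i; apply: divr_ge0 => //; exact/ltW.
have -> : \sum_i mubar i * k i = (\sum_j s_ b r j * k j) / \sum_j s_ b r j.
  by rewrite mulr_suml; apply: eq_bigr => i _; rewrite /mubar mulrAC.
rewrite [X in _ <= _ * X]invfM mulrA; apply: ler_wpM2r; first by rewrite invr_ge0.
by apply: ler_wpM2r; [rewrite invr_ge0 | exact: closed_loop_le].
Qed.
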